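(* Let $X$ and $Y$ be topological spaces, let $f: X \to X$ and $g: Y \to Y$ be maps, and let $\Phi: X \to \mathbb{R}^n$ and $\Psi: Y \to \mathbb{R}^n$ be probe functions. Suppose $h: X \to Y$ is continuous and surjective with $h \circ f = g \circ h$, and that $h$ is descriptively continuous. If the set of descriptive periodic objects of $f$ (with respect to $\Phi$) is dense in $X$, then the set of descriptive periodic objects of $g$ (with respect to $\Psi$) is dense in $Y$.
   Context: A probe function is an arbitrary function into $\mathbb{R}^n$; for $A \subseteq X$ write $\Phi(A) = \{\Phi(a) : a \in A\}$. Subsets $A, B \subseteq X$ are descriptively near, written $A \,\delta_{\Phi}\, B$, if $\Phi(A) \cap \Phi(B) \neq \emptyset$ (similarly $\delta_{\Psi}$ on $Y$). The map $h$ is descriptively continuous if $A \,\delta_{\Phi}\, B$ implies $h(A) \,\delta_{\Psi}\, h(B)$ for all $A, B \subseteq X$. An object $a \in X$ is a descriptive periodic object of $f$ if $\Phi(f^m(a)) = \Phi(a)$ for some integer $m \geq 1$; analogously $y \in Y$ is a descriptive periodic object of $g$ if $\Psi(g^m(y)) = \Psi(y)$ for some integer $m \geq 1$. *)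

From HB Require Import structures.
From mathcomp Require Import all_boot all_order all_algebra.
From mathcomp Require Import all_classical all_reals topology.
Set Implicit Arguments. Unset Strict Implicit. Unset Printing Implicit Defensive.
Local Open Scope classical_set_scope.

Definition descr_near (X V : Type) (Phi : X -> V) (A B : set X) : Prop :=
  Phi @` A `&` Phi @` B !=set0.

Definition descr_continuous (X Y V : Type) (Phi : X -> V) (Psi : Y -> V)
  (h : X -> Y) : Prop :=
  forall A B : set X, descr_near Phi A B -> descr_near Psi (h @` A) (h @` B).

Definition descr_periodic (X V : Type) (Phi : X -> V) (f : X -> X) (a : X) : Prop :=
  exists m : nat, (1 <= m)%N /\ Phi (iter m f a) = Phi a.

From HB Require Import structures.
From mathcomp Require Import all_boot all_order all_algebra.
From mathcomp Require Import all_classical all_reals topology.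
Set Implicit Arguments. Unset Strict Implicit. Unset Printing Implicit Defensive.
Local Open Scope classical_set_scope.

(* A semiconjugacy h maps descriptive periodic objects of f to descriptive
   periodic objects of g: descriptive continuity applied to the singletons
   {f^m a} and {a} turns Phi (f^m a) = Phi a into Psi (g^m (h a)) = Psi (h a).
   Since a continuous surjection maps dense sets onto dense sets, the image
   of the dense set of periodic objects of f is dense. *)

Lemma iter_semiconj (T U : Type) (h : T -> U) (f : T -> T) (g : U -> U) :
  h \o f = g \o h -> forall k x, h (iter k f x) = iter k g (h x).
Proof.
move=> hfg; elim=> [//|k IHk] x.
by rewrite !iterS -IHk; exact: (congr1 (fun F => F (iter k f x)) hfg).
Qed.

Lemma descr_continuous_eq (X Y V : Type) (Phi : X -> V) (Psi : Y -> V)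
    (h : X -> Y) (a b : X) :
  descr_continuous Phi Psi h -> Phi a = Phi b -> Psi (h a) = Psi (h b).
Proof.
move=> hd Phiab.
have [|_ [[_ [_ -> <-] <-] [_ [_ -> <-] ]]] := hd [set a] [set b].
  by exists (Phi a); split; [exists a | exists b].
by [].
Qed.

Lemma descr_periodic_semiconj (X Y V : Type) (Phi : X -> V) (Psi : Y -> V)
    (f : X -> X) (g : Y -> Y) (h : X -> Y) (a : X) :
  descr_continuous Phi Psi h -> h \o f = g \o h ->
  descr_periodic Phi f a -> descr_periodic Psi g (h a).
Proof.
move=> hd hfg [m [m_gt0 Phim]]; exists m; split=> //.
by rewrite -(iter_semiconj hfg); exact: (descr_continuous_eq hd).
Qed.

Lemma subset_dense (T : topologicalType) (A B : set T) :
  A `<=` B -> dense A -> dense B.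
Proof.
move=> AB dA O O0 oO; have [x [Ox Ax]] := dA O O0 oO.
by exists x; split; [|exact: AB].
Qed.

Lemma dense_image (X Y : topologicalType) (h : X -> Y) (A : set X) :
  continuous h -> (forall y : Y, exists x : X, h x = y) ->
  dense A -> dense (h @` A).
Proof.
move=> hc hs dA O [y Oy] oO.
have [x hxy] := hs y.
have Ohx : (h @^-1` O) x by rewrite /preimage /= hxy.
have oOh : open (h @^-1` O) by apply: open_comp => // z _; exact: hc.
have [z [Ohz Az]] := dA (h @^-1` O) (ex_intro _ x Ohx) oOh.
by exists (h z); split=> //; exists z.
Qed.

Theorem lemma4 (R : realType) (n : nat) (X Y : topologicalType)
  (f : X -> X) (g : Y -> Y) (Phi : X -> 'rV[R]_n) (Psi : Y -> 'rV[R]_n)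
  (h : X -> Y) :
  continuous h -> (forall y : Y, exists x : X, h x = y) -> h \o f = g \o h ->
  descr_continuous Phi Psi h ->
  dense [set a | descr_periodic Phi f a] ->
  dense [set y | descr_periodic Psi g y].
Proof.
move=> hc hs hfg hd dP.
apply: subset_dense (dense_image hc hs dP).
move=> _ [a Pa <-]; exact: (descr_periodic_semiconj hd hfg Pa).
Qed.
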